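(* Let $K\subset S^3$ be a knot and $C_0=CFK^-(K)$, viewed as a $(\mathbb{Z},U)$-filtered complex filtered by the Alexander grading $A$. Choose a horizontally simplified basis $\{x_1,\dots,x_N,y_1,\dots,y_N,z\}$ of $C_0$ over $\mathbb{F}[U]$. The $\mathbb{F}$-basis of $C_0$ then consists of the homogeneous elements $U^m w$ with $m\ge 0$ and $w$ in this basis; in particular $\partial_H(y_1)=U^{r_1}x_1$ with $r_1>0$. Define the following objects. - Let $h_1:C_0\to C_0$ be the $\mathbb{F}$-linear map with $h_1(U^{r_1+n}x_1)=U^ny_1$ for all $n\ge 0$, and $h_1=0$ on all other homogeneous basis elements. - Let $C_1$ be the $\mathbb{F}$-span of all homogeneous basis elements except $U^{r_1+n}x_1$ and $U^ny_1$ ($n\ge0$), with projection $\pi:C_0\to C_1$ and inclusion $\iota:C_1\to C_0$. - Set $\partial_1=\pi\circ(\partial+\partial h_1\partial)\circ\iota$, $U_1=\pi\circ(U+\partial h_1U)\circ\iota$, and $A_1=A\circ\iota$. Then $(C_1,\partial_1,A_1,U_1)$ is a $(\mathbb{Z},U)$-filtered chain deformation retract of $C_0$, via the maps $f_1=\pi\circ(I+\partial h_1)$ and $g_1=(I+h_1\partial)\circ\iota$.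
   Context: Coefficients are in $\mathbb{F}=\mathbb{Z}/2$. $CFK^-(K)$ is the Ozsváth–Szabó knot Floer complex. It is freely generated over $\mathbb{F}[U]$ by finitely many homogeneous generators and carries an Alexander filtration with $A(U^nx)=A(x)-n$ and $A(\sum_i y_i)=\max_i A(y_i)$ for homogeneous $y_i$. It also carries a Maslov grading, lowered by $1$ by $\partial$ and by $2$ by $U$. For a homogeneous element $w$, $\partial_H(w)$ (the horizontal differential) is the sum of the terms of $\partial w$ whose Alexander grading equals $A(w)$. A basis $\{x_i,y_i,z\}$ over $\mathbb{F}[U]$ is horizontally simplified if $\partial_H(y_i)=U^{r_i}x_i$ for some $r_i>0$ and $\partial_H(x_i)=\partial_H(z)=0$. A $\mathbb{Z}$-filtration is a function $F$ with $F(x+y)\le\max(F(x),F(y))$, $F(\partial x)\le F(x)$, and $F^{-1}(-\infty)=\{0\}$. A $(\mathbb{Z},U)$-filtered complex is a filtered complex with a specified filtered chain map $U$. $C'$ is a $(\mathbb{Z},U)$-filtered chain deformation retract of $C$ if there are filtered chain maps $f:C\to C'$ and $g:C'\to C$ satisfying: - $fg=I_{C'}$; - $gf=I+\partial h+h\partial$ for a filtered map $h$; - $fU\sim U'f$ and $gU'\sim Ug$, where $\sim$ denotes filtered chain homotopy. *)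

From HB Require Import structures.
From mathcomp Require Import all_boot all_order all_algebra.
Set Implicit Arguments. Unset Strict Implicit. Unset Printing Implicit Defensive.
Import Order.TTheory GRing.Theory Num.Theory.
Local Open Scope ring_scope.

(* Filtration levels: [None] stands for -infinity.                     *)
Definition ole (a b : option int) : bool :=
  match a, b with
  | None, _ => true
  | Some _, None => false
  | Some x, Some y => (x <= y)%R
  end.

Definition omax (a b : option int) : option int :=
  match a, b with
  | None, _ => b
  | _, None => a
  | Some x, Some y => Some (Order.max x y)
  end.

(* map is the same as an additive map.                                 *)
Section Generic.
Variables (T T' : zmodType).

Definition additive_map (f : T -> T') := forall x y, f (x + y) = f x + f y.

Definition is_filtration (d : T -> T) (F : T -> option int) : Prop :=
  [/\ forall x y, ole (F (x + y)) (omax (F x) (F y)),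
      forall x, ole (F (d x)) (F x)
    & forall x, F x = None <-> x = 0].

Definition filtered_map (F : T -> option int) (F' : T' -> option int)
  (f : T -> T') : Prop := forall x, ole (F' (f x)) (F x).

Definition filtered_chain_map (d : T -> T) (F : T -> option int)
  (d' : T' -> T') (F' : T' -> option int) (f : T -> T') : Prop :=
  [/\ additive_map f, filtered_map F F' f & forall x, f (d x) = d' (f x)].

(* filtered chain homotopy between phi and psi (signs irrelevant in char 2) *)
Definition filtered_homotopic (d : T -> T) (F : T -> option int)
  (d' : T' -> T') (F' : T' -> option int) (phi psi : T -> T') : Prop :=
  exists H : T -> T', [/\ additive_map H, filtered_map F F' H &
     forall x, phi x = psi x + d' (H x) + H (d x)].
End Generic.

Definition ZU_filtered_complex (T : zmodType) (d : T -> T) (U : T -> T)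
  (F : T -> option int) : Prop :=
  [/\ additive_map d, forall x, d (d x) = 0, is_filtration d F
    & filtered_chain_map d F d F U].

Definition ZU_deformation_retract (T T' : zmodType)
  (d : T -> T) (U : T -> T) (F : T -> option int)
  (d' : T' -> T') (U' : T' -> T') (F' : T' -> option int)
  (f : T -> T') (g : T' -> T) : Prop :=
  ZU_filtered_complex d U F /\ ZU_filtered_complex d' U' F' /\
  filtered_chain_map d F d' F' f /\ filtered_chain_map d' F' d F g /\
  (forall x, f (g x) = x) /\
  (exists h : T -> T, [/\ additive_map h, filtered_map F F h &
          forall x, g (f x) = x + d (h x) + h (d x)]) /\
  filtered_homotopic d F d' F' (fun x => f (U x)) (fun x => U' (f x)) /\
  filtered_homotopic d' F' d F (fun x => g (U' x)) (fun x => U (g x)).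

Definition gen (N : nat) : finType := (('I_N + 'I_N) + unit)%type.
Definition gx {N} (i : 'I_N) : gen N := inl (inl i).
Definition gy {N} (i : 'I_N) : gen N := inl (inr i).
Definition gz {N} : gen N := inr tt.

(* F = Z/2; F[U] = {poly 'F_2} with U = 'X.  An element of C0 is the   *)
(* family of its coordinates in F[U] on the generators.                *)
Definition C0 (N : nat) : zmodType := {ffun gen N -> {poly 'F_2}}.

Definition genel {N} (w : gen N) : C0 N := [ffun v => if v == w then 1 else 0].

Definition Umul {N} (x : C0 N) : C0 N := [ffun v => 'X * x v].

(* the F[U]-linear differential with matrix D: d(w) = sum_v D w v . v *)
Definition dmat {N} (D : gen N -> gen N -> {poly 'F_2}) (x : C0 N) : C0 N :=
  [ffun v => \sum_(w : gen N) x w * D w v].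

(* Alexander grading: A(U^m w) = Ag w - m, A(sum) = max, A(0) = -oo. *)
Definition Alex {N} (Ag : gen N -> int) (x : C0 N) : option int :=
  \big[omax/None]_(w : gen N)
     \big[omax/None]_(m < size (x w) | (x w)`_m != 0) Some (Ag w - (m : nat)%:Z).

(* Maslov grading of the homogeneous element U^m w is Mg w - 2m; the
   differential lowers it by one: every term U^m v of d(w) has Maslov
   grading Mg w - 1. *)
Definition d_lowers_maslov {N} (D : gen N -> gen N -> {poly 'F_2})
  (Mg : gen N -> int) : Prop :=
  forall w v (m : nat), (D w v)`_m != 0 -> Mg v - 2 * (m : int) = Mg w - 1.

Definition dH {N} (D : gen N -> gen N -> {poly 'F_2}) (Ag : gen N -> int)
  (w : gen N) : C0 N :=
  [ffun v => \sum_(m < size (dmat D (genel w) v) | Ag v - (m : nat)%:Z == Ag w)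
               ((dmat D (genel w) v)`_m *: 'X^m)].

Definition horizontally_simplified {N} (D : gen N -> gen N -> {poly 'F_2})
  (Ag : gen N -> int) (r : 'I_N -> nat) : Prop :=
  [/\ forall i, (0 < r i)%N /\ dH D Ag (gy i) = [ffun v => 'X^(r i) * genel (gx i) v],
      forall i, dH D Ag (gx i) = 0
    & dH D Ag gz = 0].

Section Cancel.
Variables (N : nat) (i1 : 'I_N) (r1 : nat).

Definition h1 (x : C0 N) : C0 N :=
  [ffun v => if v == gy i1 then drop_poly r1 (x (gx i1)) else 0].

(* C1 = F-span of all U^m w except U^{r1+n} x1 and U^n y1 *)
Definition inC1 : {pred C0 N} :=
  fun x => (x (gy i1) == 0) && (size (x (gx i1)) <= r1)%N.

Lemma inC1_zmod_closed : zmod_closed inC1.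
Proof.
split.
  by rewrite /inC1 /in_mem /= !ffunE eqxx size_poly0.
move=> x y; rewrite /inC1 /in_mem /= => /andP[/eqP hx sx] /andP[/eqP hy sy].
rewrite !ffunE hx hy subrr eqxx /=.
apply: leq_trans (size_polyD _ _) _.
by rewrite size_polyN geq_max sx sy.
Qed.

HB.instance Definition _ := GRing.isZmodClosed.Build (C0 N) inC1 inC1_zmod_closed.

Inductive C1 : predArgType := MkC1 (x : C0 N) of x \in inC1.
Definition c1val (c : C1) : C0 N := let: MkC1 x _ := c in x.
HB.instance Definition _ := [isSub of C1 for c1val].
HB.instance Definition _ := [Choice of C1 by <:].
HB.instance Definition _ := [SubChoice_isSubZmodule of C1 by <:].

Definition iota1 (c : C1) : C0 N := c1val c.

Definition pi0 (x : C0 N) : C0 N :=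
  [ffun v => if v == gy i1 then 0
             else if v == gx i1 then take_poly r1 (x v) else x v].

Lemma pi0_in (x : C0 N) : pi0 x \in inC1.
Proof.
rewrite /inC1 /in_mem /= !ffunE eqxx /=.
rewrite !eqxx /=; exact: size_take_poly.
Qed.

Definition pi1 (x : C0 N) : C1 := MkC1 (pi0_in x).

Variables (D : gen N -> gen N -> {poly 'F_2}) (Ag : gen N -> int).
Let d0 := dmat D.

Definition d1 (c : C1) : C1 := pi1 (d0 (iota1 c) + d0 (h1 (d0 (iota1 c)))).
Definition U1 (c : C1) : C1 := pi1 (Umul (iota1 c) + d0 (h1 (Umul (iota1 c)))).
Definition A1 (c : C1) : option int := Alex Ag (iota1 c).
Definition f1 (x : C0 N) : C1 := pi1 (x + d0 (h1 x)).
Definition g1 (c : C1) : C0 N := iota1 c + h1 (d0 (iota1 c)).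
End Cancel.

Arguments d1 {N} i1 r1 D c.
Arguments U1 {N} i1 r1 D c.
Arguments A1 {N} i1 r1 Ag c.
Arguments f1 {N} i1 r1 D x.
Arguments g1 {N} i1 r1 D c.

From HB Require Import structures.
From mathcomp Require Import all_boot all_order all_algebra.
From mathcomp Require Import zify.
Import Order.TTheory GRing.Theory Num.Theory.
Local Open Scope ring_scope.

(* Since d lowers the Maslov grading by one, all nonzero terms of the
   x1-coefficient of d(y1) sit in a single U-degree, so horizontal
   simplification forces that coefficient to be exactly U^{r1}, with
   A(y1) = A(x1) - r1.  Hence h1 d is the identity on the line F[U] y1, and for
   every x the x1-coordinate of x + d h1 x has U-degree < r1, so pi acts on it
   by merely deleting its y1-coordinate.  With these two facts, f1 g1 = I,
   g1 f1 = I + d h1 + h1 d and the chain-map identities are direct computations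
   in characteristic 2; f1 U = U1 f1 on the nose, and h1 U g1 is a homotopy
   from g1 U1 to U g1.  All maps involved lower A, h1 because
   A(U^n y1) = A(U^{r1+n} x1). *)

Lemma ole_refl a : ole a a.
Proof. by case: a => //= x; exact: lexx. Qed.

Lemma ole_trans a b c : ole a b -> ole b c -> ole a c.
Proof. by case: a; case: b; case: c => //= x y z; apply: le_trans. Qed.
Arguments ole_trans {a b c}.

Lemma ole_omax a b c : ole (omax a b) c = ole a c && ole b c.
Proof.
case: a; case: b; case: c => //= *; first by rewrite ge_max.
by rewrite andbT.
Qed.

Lemma ole_big_omaxP (I : eqType) (r : seq I) (P : pred I) (F : I -> option int) b :
  ole (\big[omax/None]_(i <- r | P i) F i) b <->
  (forall i, i \in r -> P i -> ole (F i) b).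
Proof.
elim: r => [|a r IH]; first by rewrite big_nil; split=> // _; case: b.
rewrite big_cons; case Pa: (P a).
  rewrite ole_omax; split.
    move=> /andP[Ha /IH Hr] i; rewrite inE => /orP[/eqP->//|]; exact: Hr.
  move=> H; rewrite H ?mem_head //=; apply/IH => i ir; apply: H.
  by rewrite inE ir orbT.
rewrite IH; split=> H i.
  by rewrite inE => /orP[/eqP->|]; [rewrite Pa | exact: H].
by move=> ir; apply: H; rewrite inE ir orbT.
Qed.

Section AlexanderGrading.
Variables (N : nat) (Ag : gen N -> int).
Local Notation A := (Alex Ag).

Lemma Alex_leP (x : C0 N) b :
  ole (A x) b <->
  (forall w (m : nat), (x w)`_m != 0 -> ole (Some (Ag w - m%:Z)) b).
Proof.
rewrite /Alex ole_big_omaxP; split=> [H w m nz | H w _ _].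
  have lt : (m < size (x w))%N.
    by rewrite ltnNge; apply: contra nz => le; rewrite nth_default.
  by move/ole_big_omaxP: (H w (mem_index_enum _) isT) => /(_ (Ordinal lt)); apply.
by apply/ole_big_omaxP => i _ nz; exact: H.
Qed.

Lemma Alex_ge_coef {x : C0 N} {w} {m : nat} :
  (x w)`_m != 0 -> ole (Some (Ag w - m%:Z)) (A x).
Proof. by move: w m; apply/Alex_leP; exact: ole_refl. Qed.

Lemma Alex_le_dominated (x y : C0 N) :
  (forall w (m : nat), (y w)`_m != 0 ->
     exists w' (m' : nat), (x w')`_m' != 0 /\ Ag w - m%:Z <= Ag w' - m'%:Z) ->
  ole (A y) (A x).
Proof.
move=> H; apply/Alex_leP => w m /H[w' [m' [nz' le]]].
by apply: ole_trans _ (Alex_ge_coef nz').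
Qed.

Lemma Alex0 : A 0 = None.
Proof.
have : ole (A 0) None by apply/Alex_leP => w m; rewrite ffunE coef0 eqxx.
by case: (A 0).
Qed.

Lemma Alex_Umul (x : C0 N) : ole (A (Umul x)) (A x).
Proof.
apply: Alex_le_dominated => w [|m]; rewrite ffunE coefXM //= => nz.
by exists w, m; split => //; lia.
Qed.
End AlexanderGrading.

Lemma F2poly_addrr (p : {poly 'F_2}) : p + p = 0.
Proof. by apply: addrr_pchar2; rewrite pchar_poly pchar_Fp. Qed.

Definition single {N} (w : gen N) (p : {poly 'F_2}) : C0 N :=
  [ffun v => if v == w then p else 0].

Section FreeComplex.
Variables (N : nat) (D : gen N -> gen N -> {poly 'F_2}).
Local Notation d := (dmat D).

Lemma C0_addxx (x : C0 N) : x + x = 0.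
Proof.
by apply/ffunP => v; rewrite !ffunE F2poly_addrr.
Qed.

Lemma dmatD (x y : C0 N) : d (x + y) = d x + d y.
Proof.
apply/ffunP => v; rewrite !ffunE -big_split.
by apply: eq_bigr => w _; rewrite ffunE mulrDl.
Qed.

Lemma dmat0 : d 0 = 0.
Proof. by apply/ffunP => v; rewrite !ffunE big1 // => w _; rewrite ffunE mul0r. Qed.

Lemma UmulD (x y : C0 N) : Umul (x + y) = Umul x + Umul y.
Proof. by apply/ffunP => v; rewrite !ffunE mulrDr. Qed.

Lemma dmatU (x : C0 N) : d (Umul x) = Umul (d x).
Proof.
apply/ffunP => v; rewrite !ffunE mulr_sumr.
by apply: eq_bigr => w _; rewrite ffunE mulrA.
Qed.

Lemma dmat_single (w : gen N) p v : d (single w p) v = p * D w v.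
Proof.
rewrite ffunE (bigD1 w) //= ffunE eqxx big1 ?addr0 // => u /negbTE ne.
by rewrite ffunE ne mul0r.
Qed.

Lemma Umul_single (w : gen N) q : Umul (single w q) = single w ('X * q).
Proof. by apply/ffunP => v; rewrite !ffunE; case: ifP; rewrite ?mulr0. Qed.

Lemma C0_ZU_filtered_complex Ag :
  (forall x, d (d x) = 0) -> is_filtration d (Alex Ag) ->
  ZU_filtered_complex d Umul (Alex Ag).
Proof.
move=> dd filt; split => //; first exact: dmatD.
by split => // [|x|x]; [exact: UmulD | exact: Alex_Umul | rewrite dmatU].
Qed.
End FreeComplex.

Section Cancellation.
Variables (N : nat) (i1 : 'I_N) (r1 : nat) (D : gen N -> gen N -> {poly 'F_2})
  (Ag : gen N -> int).
Hypothesis dd : forall x : C0 N, dmat D (dmat D x) = 0.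
Hypothesis D_y1_x1 : D (gy i1) (gx i1) = 'X^r1.

Local Notation d := (dmat D).
Local Notation h := (h1 i1 r1).
Local Notation pi := (pi0 i1 r1).
Local Notation x1 := (gx i1).
Local Notation y1 := (gy i1).
Local Notation Y := (single y1).
Local Notation C1 := (C1 i1 r1).
Local Notation f := (f1 i1 r1 D).
Local Notation g := (g1 i1 r1 D).
Local Notation d' := (d1 i1 r1 D).
Local Notation U' := (U1 i1 r1 D).

Lemma h1E (x : C0 N) : h x = Y (drop_poly r1 (x x1)).
Proof. by []. Qed.

Lemma h1D (x y : C0 N) : h (x + y) = h x + h y.
Proof. by apply/ffunP => v; rewrite !ffunE; case: ifP; rewrite ?addr0 // drop_polyD. Qed.

Lemma h1_0 : h 0 = 0.
Proof. by apply/ffunP => v; rewrite !ffunE drop_poly0r; case: ifP. Qed.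

Lemma h1_single_y1 q : h (Y q) = 0.
Proof. by apply/ffunP => v; rewrite !ffunE drop_poly0r; case: ifP. Qed.

Lemma h1d_single_y1 q : h (d (Y q)) = Y q.
Proof. by rewrite h1E dmat_single D_y1_x1 drop_polyMXn_id. Qed.

Lemma pi0D (x y : C0 N) : pi (x + y) = pi x + pi y.
Proof.
apply/ffunP => v; rewrite !ffunE.
by case: ifP; rewrite ?addr0 //; case: ifP; rewrite ?take_polyD.
Qed.

Lemma pi0_0 : pi 0 = 0.
Proof. by apply/ffunP => v; rewrite !ffunE; case: ifP => //; case: ifP; rewrite ?take_poly0r. Qed.

Lemma pi0_single_y1 q : pi (Y q) = 0.
Proof.
apply/ffunP => v; rewrite !ffunE; case: ifP => // ny.
by case: ifP; rewrite ?ny ?take_poly0r.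
Qed.

Lemma pi0_low (x : C0 N) : drop_poly r1 (x x1) = 0 -> pi x = x + Y (x y1).
Proof.
move=> x1_low; apply/ffunP => v; rewrite !ffunE.
case: (v =P y1) => [->|/eqP ny]; first by rewrite F2poly_addrr.
rewrite addr0; case: ifP => // /eqP ->.
by rewrite -[in RHS](poly_take_drop r1 (x x1)) x1_low mul0r addr0.
Qed.

Lemma drop_x1_coord_cancel (x : C0 N) : drop_poly r1 ((x + d (h x)) x1) = 0.
Proof.
by rewrite ffunE h1E dmat_single D_y1_x1 drop_polyD drop_polyMXn_id F2poly_addrr.
Qed.

Lemma f1E (x : C0 N) : val (f x) = x + d (h x) + Y ((x + d (h x)) y1).
Proof. exact/pi0_low/drop_x1_coord_cancel. Qed.

Lemma f1D (x y : C0 N) : f (x + y) = f x + f y.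
Proof. by apply/val_inj; rewrite GRing.valD /= h1D dmatD -pi0D addrACA. Qed.

Lemma f1_0 : f 0 = 0.
Proof. by have := f1D 0 0; rewrite addr0 -{1}[f 0]addr0 => /addrI. Qed.

Lemma f1_single_y1 q : f (Y q) = 0.
Proof. by apply/val_inj; rewrite /= h1_single_y1 dmat0 addr0 pi0_single_y1. Qed.

Lemma f1_d_single_y1 q : f (d (Y q)) = 0.
Proof. by apply/val_inj; rewrite /= h1d_single_y1 C0_addxx pi0_0. Qed.

Lemma h1_C1 (c : C1) : h (val c) = 0.
Proof.
have /andP[_ small] : val c \in inC1 i1 r1 := valP c.
by apply/ffunP => v; rewrite !ffunE drop_poly_eq0 //; case: ifP.
Qed.

Lemma pi0_C1 (c : C1) : pi (val c) = val c.
Proof.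
have /andP[/eqP y1_0 small] : val c \in inC1 i1 r1 := valP c.
apply/ffunP => v; rewrite !ffunE; case: (v =P y1) => [->|_]; first by rewrite y1_0.
by case: (v =P x1) => [->|_]; rewrite ?take_poly_id.
Qed.

Lemma f1_valK (c : C1) : f (val c) = c.
Proof. by apply/val_inj; rewrite /= h1_C1 dmat0 addr0 pi0_C1. Qed.

Lemma g1E (c : C1) : g c = val c + h (d (val c)).
Proof. by []. Qed.

Lemma d1E (c : C1) : d' c = f (d (val c)).
Proof. by []. Qed.

Lemma U1E (c : C1) : U' c = f (Umul (val c)).
Proof. by []. Qed.

Lemma f1_h1 (x : C0 N) : f (h x) = 0.
Proof. exact: f1_single_y1. Qed.

Lemma f1_dh1 (x : C0 N) : f (d (h x)) = 0.
Proof. exact: f1_d_single_y1. Qed.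

Lemma f1g1 (c : C1) : f (g c) = c.
Proof. by rewrite g1E f1D f1_h1 addr0 f1_valK. Qed.

Lemma g1f1 (x : C0 N) : g (f x) = x + d (h x) + h (d x).
Proof.
by rewrite g1E f1E !dmatD dd !h1D h1d_single_y1 h1_0 addr0 addrACA C0_addxx addr0.
Qed.

Lemma f1_dmat_f1 (x : C0 N) : f (d (val (f x))) = f (d x).
Proof. by rewrite f1E !dmatD dd addr0 f1D f1_d_single_y1 addr0. Qed.

Lemma f1_Umul_f1 (x : C0 N) : f (Umul (val (f x))) = f (Umul x).
Proof.
rewrite f1E !UmulD !f1D Umul_single f1_single_y1 -dmatU h1E Umul_single.
by rewrite f1_d_single_y1 !addr0.
Qed.

Lemma f1_chain (x : C0 N) : f (d x) = d' (f x).
Proof. by rewrite d1E f1_dmat_f1. Qed.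

Lemma g1_chain (c : C1) : g (d' c) = d (g c).
Proof.
rewrite g1E d1E f1E !dmatD !dd !h1D h1d_single_y1 h1_0 !add0r.
by rewrite -addrA C0_addxx addr0.
Qed.

Lemma d1_via_g1 (c : C1) : d' c = f (d (g c)).
Proof. by rewrite d1E g1E dmatD f1D f1_dh1 addr0. Qed.

Lemma d1D (c c' : C1) : d' (c + c') = d' c + d' c'.
Proof. by rewrite !d1E GRing.valD dmatD f1D. Qed.

Lemma d1d1 (c : C1) : d' (d' c) = 0.
Proof. by rewrite d1_via_g1 g1_chain dd f1_0. Qed.

Lemma U1D (c c' : C1) : U' (c + c') = U' c + U' c'.
Proof. by rewrite !U1E GRing.valD UmulD f1D. Qed.

Lemma U1_d1 (c : C1) : U' (d' c) = d' (U' c).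
Proof. by rewrite U1E d1E f1_Umul_f1 d1E U1E f1_dmat_f1 dmatU. Qed.

Lemma f1_Umul (x : C0 N) : f (Umul x) = U' (f x).
Proof. by rewrite U1E f1_Umul_f1. Qed.

Lemma g1D (c c' : C1) : g (c + c') = g c + g c'.
Proof. by rewrite !g1E GRing.valD dmatD h1D addrACA. Qed.

Lemma h1_Umul_h1 (x : C0 N) : h (Umul (h x)) = 0.
Proof. by rewrite [h x]h1E Umul_single h1_single_y1. Qed.

Lemma h1_Umul_dh1 (x : C0 N) : h (Umul (d (h x))) = Umul (h x).
Proof. by rewrite -dmatU [h x]h1E Umul_single h1d_single_y1. Qed.

Lemma g1_U1 (c : C1) :
  g (U' c) = Umul (g c) + d (h (Umul (g c))) + h (Umul (g (d' c))).
Proof.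
rewrite U1E g1f1 g1_chain !g1E !UmulD !h1D !dmatD h1_Umul_h1 dmat0 addr0.
rewrite UmulD h1D h1_Umul_dh1 -dmatU -!addrA; congr (_ + _); rewrite addrCA; congr (_ + _).
by rewrite addrCA C0_addxx addr0.
Qed.

Hypothesis Ag_y1 : Ag y1 = Ag x1 - r1%:Z.
Hypothesis filt : is_filtration d (Alex Ag).

Local Notation A := (Alex Ag).
Local Notation A' := (A1 i1 r1 Ag).

Lemma A1E (c : C1) : A' c = A (val c).
Proof. by []. Qed.

Lemma Alex_addr (x y : C0 N) b : ole (A x) b -> ole (A y) b -> ole (A (x + y)) b.
Proof.
have [A_add _ _] := filt; move=> Ax Ay.
by apply: ole_trans (A_add x y) _; rewrite ole_omax Ax Ay.
Qed.

Lemma Alex_dmat (x : C0 N) : ole (A (d x)) (A x).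
Proof. by have [_ A_d _] := filt. Qed.

Lemma Alex_h1 (x : C0 N) : ole (A (h x)) (A x).
Proof.
apply: Alex_le_dominated => w m; rewrite h1E ffunE.
case: (w =P y1) => [->|_]; last by rewrite coef0 eqxx.
rewrite coef_drop_poly => nz; exists x1, (m + r1)%N; split => //.
rewrite Ag_y1; lia.
Qed.

Lemma Alex_pi0 (x : C0 N) : ole (A (pi x)) (A x).
Proof.
apply: Alex_le_dominated => w m; rewrite ffunE.
case: ifP => _; first by rewrite coef0 eqxx.
case: ifP => _; last by move=> nz; exists w, m.
rewrite coef_take_poly; case: ifP => _; last by rewrite eqxx.
by move=> nz; exists w, m.
Qed.

Lemma Alex_f1 (x : C0 N) : ole (A' (f x)) (A x).
Proof.
apply: ole_trans (Alex_pi0 _) _; apply: Alex_addr; first exact: ole_refl.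
exact: ole_trans (Alex_dmat _) (Alex_h1 _).
Qed.

Lemma Alex_g1 (c : C1) : ole (A (g c)) (A' c).
Proof.
apply: Alex_addr; first exact: ole_refl.
exact: ole_trans (Alex_h1 _) (Alex_dmat _).
Qed.

Lemma C1_ZU_filtered_complex : ZU_filtered_complex d' U' A'.
Proof.
have [A_add _ A_None] := filt.
split; [exact: d1D | exact: d1d1 | split | split].
- by move=> c c'; rewrite !A1E GRing.valD; exact: A_add.
- by move=> c; rewrite d1E; exact: ole_trans (Alex_f1 _) (Alex_dmat _).
- move=> c; rewrite A1E A_None; split=> [c0|->]; last exact: GRing.val0.
  by apply/val_inj; rewrite c0 GRing.val0.
- exact: U1D.
- by move=> c; rewrite U1E; exact: ole_trans (Alex_f1 _) (Alex_Umul _ Ag _).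
- exact: U1_d1.
Qed.

Lemma f1_filtered_chain_map : filtered_chain_map d A d' A' f.
Proof. by split; [exact: f1D | exact: Alex_f1 | exact: f1_chain]. Qed.

Lemma g1_filtered_chain_map : filtered_chain_map d' A' d A g.
Proof. by split; [exact: g1D | exact: Alex_g1 | exact: g1_chain]. Qed.

Lemma f1_Umul_homotopic :
  filtered_homotopic d A d' A' (fun x => f (Umul x)) (fun x => U' (f x)).
Proof.
exists (fun _ => 0); split=> [x y | x | x]; first by rewrite addr0.
  by rewrite A1E GRing.val0 Alex0.
by rewrite d1E GRing.val0 dmat0 f1_0 !addr0 f1_Umul.
Qed.

Lemma g1_U1_homotopic :
  filtered_homotopic d' A' d A (fun c => g (U' c)) (fun c => Umul (g c)).
Proof.
exists (fun c => h (Umul (g c))); split=> [c c' | c | c].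
- by rewrite g1D UmulD h1D.
- exact: ole_trans (Alex_h1 _) (ole_trans (Alex_Umul _ Ag _) (Alex_g1 _)).
- exact: g1_U1.
Qed.

Lemma cancellation_deformation_retract : ZU_deformation_retract d Umul A d' U' A' f g.
Proof.
split; first exact: C0_ZU_filtered_complex.
split; first exact: C1_ZU_filtered_complex.
split; first exact: f1_filtered_chain_map.
split; first exact: g1_filtered_chain_map.
split; first exact: f1g1.
split; last by split; [exact: f1_Umul_homotopic | exact: g1_U1_homotopic].
by exists h; split; [exact: h1D | exact: Alex_h1 | exact: g1f1].
Qed.

End Cancellation.

Lemma sum_ord_cond_eq (R : nmodType) n (c : pred nat) (k : nat) (a : nat -> R) :
  \sum_(m < n | c m && (m == k :> nat)) a m = if (k < n)%N && c k then a k else 0.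
Proof.
case: ifP => [/andP[lt ck] | H].
  rewrite (bigD1 (Ordinal lt)) /= ?ck ?eqxx // big1 ?addr0 // => j /andP[/andP[_ /eqP jk] ne].
  by move: ne; rewrite -(inj_eq val_inj) /= jk eqxx.
rewrite big1 // => j /andP[cj /eqP jk]; move: H.
by rewrite -jk (ltn_ord j) cj.
Qed.

Section HorizontalArrow.
Context {N : nat} {D : gen N -> gen N -> {poly 'F_2}} {Ag Mg : gen N -> int}.

Lemma coef_dH (w v : gen N) (k : nat) :
  (dH D Ag w v)`_k =
  if (k < size (D w v))%N && (Ag v - k%:Z == Ag w) then (D w v)`_k else 0.
Proof.
rewrite ffunE; have -> : dmat D (genel w) v = D w v by rewrite (dmat_single _ D w 1) mul1r.
by rewrite coef_sumMXn (sum_ord_cond_eq _ _ (fun m : nat => Ag v - m%:Z == Ag w)).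
Qed.

Lemma maslov_coef_degree (w v : gen N) (m n : nat) :
  d_lowers_maslov D Mg -> (D w v)`_m != 0 -> (D w v)`_n != 0 -> m = n.
Proof. by move=> hm /hm Mm /hm Mn; lia. Qed.

Lemma horizontally_simplified_arrow {r : 'I_N -> nat} :
  d_lowers_maslov D Mg -> horizontally_simplified D Ag r ->
  forall i, D (gy i) (gx i) = 'X^(r i) /\ Ag (gy i) = Ag (gx i) - (r i)%:Z.
Proof.
move=> hm [Hy _ _] i; have [_ dH_y] := Hy i.
have := congr1 (fun z : C0 N => (z (gx i))`_(r i)) dH_y.
rewrite /= coef_dH !ffunE eqxx mulr1 coefXn eqxx.
case: ifP => [/andP[_ /eqP Ag_eq] coef_r | _ /eqP]; last by rewrite eq_sym oner_eq0.
split; last by rewrite -Ag_eq; lia.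
apply/polyP => j; rewrite coefXn; case: (j =P r i) => [->|ne] //.
apply/eqP; apply: contraT => nz; case: ne.
by apply: maslov_coef_degree hm nz _; rewrite coef_r oner_eq0.
Qed.
End HorizontalArrow.

Theorem lemma3p1 (N : nat) (D : gen N -> gen N -> {poly 'F_2})
  (Ag Mg : gen N -> int) (r : 'I_N -> nat) (i1 : 'I_N) :
  (forall x : C0 N, dmat D (dmat D x) = 0) ->
  is_filtration (dmat D) (Alex Ag) ->
  d_lowers_maslov D Mg ->
  horizontally_simplified D Ag r ->
  ZU_deformation_retract
    (dmat D) Umul (Alex Ag)
    (d1 i1 (r i1) D) (U1 i1 (r i1) D) (A1 i1 (r i1) Ag)
    (f1 i1 (r i1) D) (g1 i1 (r i1) D).
Proof.
move=> dd filt maslov hsimpl.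
have [D_y1_x1 Ag_y1] := horizontally_simplified_arrow maslov hsimpl i1.
exact: cancellation_deformation_retract.
Qed.
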